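(* Let $H$ be a reduced double-well type potential, $\beta>0$, and $\mu_\beta$ its Gibbs measure. Then \begin{enumerate} \item $\mu_\beta[01]=\mu_\beta[10]$; \item $\frac{\mu_\beta[0^n1]}{\mu_\beta[01]}=\Big[\sum_{k\ge n}\lambda_\beta^{-k}e^{-\beta H_k^1}\Big]F_\beta^0(\lambda_\beta)$ for $n\ge1$, and $\frac{\mu_\beta[0]}{\mu_\beta[01]}=\frac{\tilde F_\beta^1(\lambda_\beta)}{F_\beta^1(\lambda_\beta)}$; \item $\frac{\mu_\beta[1^n0]}{\mu_\beta[10]}=\Big[\sum_{k\ge n}\lambda_\beta^{-k}e^{-\beta H_k^0}\Big]F_\beta^1(\lambda_\beta)$ for $n\ge1$, and $\frac{\mu_\beta[1]}{\mu_\beta[10]}=\frac{\tilde F_\beta^0(\lambda_\beta)}{F_\beta^0(\lambda_\beta)}$; \item $\frac{\mu_\beta[01^n0]}{\mu_\beta[10]}=\frac{e^{-\beta H_n^0}F_\beta^1(\lambda_\beta)}{\lambda_\beta^n}$ and $\frac{\mu_\beta[10^n1]}{\mu_\beta[01]}=\frac{e^{-\beta H_n^1}F_\beta^0(\lambda_\beta)}{\lambda_\beta^n}$; \item $\frac{\mu_\beta[0]}{\mu_\beta[1]}=\frac{F_\beta^0(\lambda_\beta)}{F_\beta^1(\lambda_\beta)}\cdot\frac{\tilde F_\beta^1(\lambda_\beta)}{\tilde F_\beta^0(\lambda_\beta)}$. \end{enumerate}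
   Context: $\Sigma:=\{0,1\}^{\mathbb N}$, $\sigma$ the left shift. A reduced double-well type potential is a continuous nonnegative $H:\Sigma\to\mathbb R$ with summable variation such that $H=0$ on $[00]\cup[11]$, $H=H_n^0>0$ on $[01^n0]$, $H=H_n^1>0$ on $[10^n1]$ ($n\ge1$), and $\sum_{k\ge1}\sup_{n\ge0}|H_k^i-H_{k+n}^i|<\infty$ ($i=0,1$). $\mathcal L_\beta[\Phi](x)=e^{-\beta H(0x)}\Phi(0x)+e^{-\beta H(1x)}\Phi(1x)$; $\Phi_\beta$ the unique positive continuous eigenfunction with $\max\Phi_\beta=1$, $\lambda_\beta$ its eigenvalue, $\nu_\beta$ the unique probability with $\mathcal L_\beta^*\nu_\beta=\lambda_\beta\nu_\beta$; Gibbs measure $\mu_\beta:=\Phi_\beta\nu_\beta/\int\Phi_\beta d\nu_\beta$. $F_\beta^i(\lambda):=\sum_{k\ge1}\lambda^{-k}e^{-\beta H_k^i}$, $\tilde F_\beta^i(\lambda):=\sum_{k\ge1}k\lambda^{-k}e^{-\beta H_k^i}$ ($i=0,1$). *)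

From Stdlib Require Import Reals Lra Lia List.
Import ListNotations.
Open Scope R_scope.

(* Sigma = {0,1}^N, with 0 = false, 1 = true. *)
Definition Sigma := nat -> bool.

Definition scons (b : bool) (x : Sigma) : Sigma :=
  fun n => match n with O => b | S k => x k end.

Definition agree (n : nat) (x y : Sigma) : Prop :=
  forall i, (i < n)%nat -> x i = y i.

Definition continuous_S (f : Sigma -> R) : Prop :=
  forall x eps, 0 < eps -> exists N, forall y, agree N x y -> Rabs (f y - f x) < eps.

Definition is_var (f : Sigma -> R) (n : nat) (v : R) : Prop :=
  is_lub (fun r => exists x y, agree n x y /\ r = Rabs (f x - f y)) v.

Definition summable_variation (f : Sigma -> R) : Prop :=
  exists v : nat -> R, (forall n, is_var f n (v n)) /\
    exists l, infinite_sum (fun n => v (S n)) l.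

Definition word := list bool.

Definition in_cyl (w : word) (x : Sigma) : Prop :=
  forall i, (i < length w)%nat -> x i = nth i w false.

Definition in_cylb (w : word) (x : Sigma) : bool :=
  let fix go (w : word) (i : nat) : bool :=
    match w with
    | nil => true
    | b :: w' => andb (Bool.eqb (x i) b) (go w' (S i))
    end in go w O.

Definition cyl_ind (w : word) (x : Sigma) : R := if in_cylb w x then 1 else 0.

Definition in_01n0 (n : nat) (x : Sigma) : Prop :=
  in_cyl (false :: repeat true n ++ [false]) x.
Definition in_10n1 (n : nat) (x : Sigma) : Prop :=
  in_cyl (true :: repeat false n ++ [true]) x.

Definition is_tail_osc (h : nat -> R) (k : nat) (d : R) : Prop :=
  is_lub (fun r => exists n, r = Rabs (h k - h (k + n)%nat)) d.

Definition tail_summable (h : nat -> R) : Prop :=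
  exists d : nat -> R, (forall k, is_tail_osc h k (d k)) /\
    exists l, infinite_sum (fun k => d (S k)) l.

Definition reduced_double_well (H : Sigma -> R) (H0 H1 : nat -> R) : Prop :=
  continuous_S H /\
  (forall x, 0 <= H x) /\
  summable_variation H /\
  (forall x, x 0%nat = x 1%nat -> H x = 0) /\
  (forall n x, (1 <= n)%nat -> in_01n0 n x -> H x = H0 n) /\
  (forall n x, (1 <= n)%nat -> in_10n1 n x -> H x = H1 n) /\
  (forall n, (1 <= n)%nat -> 0 < H0 n) /\
  (forall n, (1 <= n)%nat -> 0 < H1 n) /\
  tail_summable H0 /\ tail_summable H1.

Definition transfer (beta : R) (H : Sigma -> R) (Phi : Sigma -> R) (x : Sigma) : R :=
  exp (- beta * H (scons false x)) * Phi (scons false x)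
  + exp (- beta * H (scons true x)) * Phi (scons true x).

(* Borel probability measures on Sigma are represented by their (Kolmogorov
   consistent) values on cylinder sets: m w = measure of [w]. *)
Definition prob_on_cyl (m : word -> R) : Prop :=
  m nil = 1 /\ (forall w, 0 <= m w) /\
  (forall w, m w = m (w ++ [false]) + m (w ++ [true])).

Fixpoint words (n : nat) : list word :=
  match n with
  | O => [nil]
  | S k => map (cons false) (words k) ++ map (cons true) (words k)
  end.

Definition ext (w : word) : Sigma := fun i => nth i w false.

Definition riemann_sum (m : word -> R) (f : Sigma -> R) (n : nat) : R :=
  fold_right Rplus 0 (map (fun w => f (ext w) * m w) (words n)).

(* integral of a continuous f w.r.t. m: limit of the Riemann sums over
   cylinders of length n *)
Definition is_integral (m : word -> R) (f : Sigma -> R) (I : R) : Prop :=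
  Un_cv (riemann_sum m f) I.

Definition is_eigenfunction (beta : R) (H : Sigma -> R) (lam : R) (Phi : Sigma -> R) : Prop :=
  continuous_S Phi /\ (forall x, 0 < Phi x) /\
  (forall x, Phi x <= 1) /\ (exists x, Phi x = 1) /\
  (forall x, transfer beta H Phi x = lam * Phi x).

(* nu probability with L_beta^* nu = lambda nu *)
Definition is_eigenmeasure (beta : R) (H : Sigma -> R) (lam : R) (nu : word -> R) : Prop :=
  prob_on_cyl nu /\
  forall g, continuous_S g -> forall I, is_integral nu g I ->
    is_integral nu (transfer beta H g) (lam * I).

Definition is_gibbs_cyl (nu : word -> R) (Phi : Sigma -> R) (mu : word -> R) : Prop :=
  exists Z, is_integral nu Phi Z /\
    forall w, exists Iw, is_integral nu (fun x => Phi x * cyl_ind w x) Iw /\ mu w = Iw / Z.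

Definition Fterm (beta lam : R) (h : nat -> R) (k : nat) : R :=
  / lam ^ k * exp (- beta * h k).
Definition tFterm (beta lam : R) (h : nat -> R) (k : nat) : R :=
  INR k * / lam ^ k * exp (- beta * h k).

From Stdlib Require Import Reals Lra Lia List FunctionalExtensionality Classical ClassicalEpsilon.
Import ListNotations.
Open Scope R_scope.

(* Write b' for the letter other than b.  Iterating L_beta Phi = lambda Phi along a run
   b^m y (y starting with b') expresses Phi(b^m y) as a series in the weights
   lambda^-k e^(-beta H_k^b') of the wells, with coefficients the values of Phi on [b' b].
   Positivity and continuity of Phi on the compact space Sigma make F^0, F^1 converge and
   force lambda > 1.  Comparing the maxima, and the minima, of Phi on [01] and [10] gives
   F^0 F^1 = 1, and in the equality case the maximum propagates to a dense set, so Phi is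
   a constant K_b on [b b'], with K_b = F^b' K_b'.  Then Phi is explicit on the cylinders
   [b^n b'] and [b b'^n b], and so is nu, by L_beta^* nu = lambda nu; this gives the
   ratios of mu.  Finally mu[01] = mu[10] is the shift invariance of mu, and summing
   mu[b] = sum_n mu[b^n b'] over the tails of F^b' produces tilde F^b'. *)

(** * Series *)

Lemma Un_cv_const (c : R) : Un_cv (fun _ => c) c.
Proof. intros eps Heps; exists O; intros n _; unfold R_dist; rewrite Rminus_diag, Rabs_R0; lra. Qed.

Lemma Un_cv_squeeze_0 (u v : nat -> R) :
  (forall n, 0 <= u n <= v n) -> Un_cv v 0 -> Un_cv u 0.
Proof.
  intros Huv Hv eps Heps; destruct (Hv eps Heps) as [N HN]; exists N; intros n Hn.
  specialize (HN n Hn); specialize (Huv n); unfold R_dist in *.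
  rewrite Rminus_0_r, Rabs_right in *; lra.
Qed.

Lemma Un_cv_inv_pow (q : R) : 1 < q -> Un_cv (fun n => / q ^ n) 0.
Proof.
  intros Hq eps Heps.
  assert (Hr : Rabs (/ q) < 1).
  { rewrite Rabs_right by (left; apply Rinv_0_lt_compat; lra).
    apply (Rmult_lt_reg_l q); [lra|]; rewrite Rinv_r; lra. }
  destruct (pow_lt_1_zero _ Hr eps Heps) as [N HN]; exists N; intros n Hn.
  unfold R_dist; rewrite Rminus_0_r, <- pow_inv; auto.
Qed.

Lemma infinite_sum_Un_cv (a : nat -> R) (l : R) : infinite_sum a l <-> Un_cv (sum_f_R0 a) l.
Proof. reflexivity. Qed.

Lemma infinite_sum_ext (a b : nat -> R) (l : R) :
  (forall k, a k = b k) -> infinite_sum a l -> infinite_sum b l.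
Proof.
  rewrite !infinite_sum_Un_cv; intros Hab; apply Un_cv_ext; intros n; apply sum_eq; auto.
Qed.

Lemma infinite_sum_scal (c : R) (a : nat -> R) (l : R) :
  infinite_sum a l -> infinite_sum (fun k => c * a k) (c * l).
Proof.
  rewrite !infinite_sum_Un_cv; intros Ha.
  apply (Un_cv_ext (fun n => c * sum_f_R0 a n)); [|apply CV_mult; [apply Un_cv_const | exact Ha]].
  intros n; rewrite scal_sum; apply sum_eq; intros; ring.
Qed.

Lemma infinite_sum_minus (a b : nat -> R) (la lb : R) :
  infinite_sum a la -> infinite_sum b lb -> infinite_sum (fun k => a k - b k) (la - lb).
Proof.
  rewrite !infinite_sum_Un_cv; intros Ha Hb.
  apply (Un_cv_ext (fun n => sum_f_R0 a n - sum_f_R0 b n)); [|apply CV_minus; assumption].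
  intros n; symmetry; apply minus_sum.
Qed.

Lemma infinite_sum_le (a b : nat -> R) (la lb : R) :
  (forall k, a k <= b k) -> infinite_sum a la -> infinite_sum b lb -> la <= lb.
Proof.
  rewrite !infinite_sum_Un_cv; intros Hab Ha Hb.
  eapply Rle_cv_lim; [|exact Ha | exact Hb]; intros n; apply sum_Rle; auto.
Qed.

Lemma infinite_sum_partial_le (a : nat -> R) (l : R) :
  (forall k, 0 <= a k) -> infinite_sum a l -> forall n, sum_f_R0 a n <= l.
Proof.
  intros Ha Hl; apply growing_ineq; [|exact Hl].
  intros n; simpl; specialize (Ha (S n)); lra.
Qed.

Lemma infinite_sum_pos (a : nat -> R) (l : R) :
  (forall k, 0 <= a k) -> 0 < a O -> infinite_sum a l -> 0 < l.
Proof. intros Ha Ha0 Hl; pose proof (infinite_sum_partial_le a l Ha Hl O); simpl in *; lra. Qed.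

Lemma infinite_sum_of_bounded (a : nat -> R) (M : R) :
  (forall k, 0 <= a k) -> (forall n, sum_f_R0 a n <= M) -> exists l, infinite_sum a l.
Proof.
  intros Ha HM; destruct (growing_cv (sum_f_R0 a)) as [l Hl].
  - intros n; simpl; specialize (Ha (S n)); lra.
  - exists M; intros x [n ->]; apply HM.
  - exists l; exact Hl.
Qed.

Lemma infinite_sum_tail (a : nat -> R) (l : R) (N : nat) :
  infinite_sum a l -> infinite_sum (fun j => a (S N + j)%nat) (l - sum_f_R0 a N).
Proof.
  rewrite !infinite_sum_Un_cv; intros Hl.
  apply (Un_cv_ext (fun J => sum_f_R0 a (J + S N) - sum_f_R0 a N)).
  - intros J; rewrite (tech2 a N (J + S N)) by lia.
    replace (J + S N - S N)%nat with J by lia; ring.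
  - apply CV_minus; [apply CV_shift', Hl | apply Un_cv_const].
Qed.

Lemma infinite_sum_tails (a : nat -> R) (l : R) :
  infinite_sum a l -> forall n, exists t, infinite_sum (fun j => a (n + j)%nat) t.
Proof.
  intros Hl [|N]; [exists l; apply (infinite_sum_ext a); [reflexivity | exact Hl]|].
  eexists; apply infinite_sum_tail, Hl.
Qed.

Lemma infinite_sum_mul_le (w u : nat -> R) (F S M : R) :
  (forall j, 0 <= w j) -> (forall j, u j <= M) ->
  infinite_sum w F -> infinite_sum (fun j => w j * u j) S -> S <= F * M.
Proof.
  intros Hw Hu HF HS; rewrite Rmult_comm.
  apply (infinite_sum_le _ _ _ _ (fun j => Rmult_le_compat_l _ _ _ (Hw j) (Hu j)) HS).
  apply (infinite_sum_ext (fun j => M * w j)); [intros; ring | apply infinite_sum_scal, HF].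
Qed.

Lemma infinite_sum_mul_ge (w u : nat -> R) (F S m : R) :
  (forall j, 0 <= w j) -> (forall j, m <= u j) ->
  infinite_sum w F -> infinite_sum (fun j => w j * u j) S -> F * m <= S.
Proof.
  intros Hw Hu HF HS.
  enough (- S <= F * - m) by lra.
  apply (infinite_sum_mul_le w (fun j => - u j)); auto.
  - intros j; specialize (Hu j); lra.
  - apply (infinite_sum_ext (fun j => -1 * (w j * u j))); [intros; ring|].
    replace (- S) with (-1 * S) by ring; apply infinite_sum_scal, HS.
Qed.

Lemma infinite_sum_mul_eq (w u : nat -> R) (F M : R) :
  (forall j, 0 < w j) -> (forall j, u j <= M) ->
  infinite_sum w F -> infinite_sum (fun j => w j * u j) (F * M) -> forall j, u j = M.
Proof.
  intros Hw Hu HF HS j.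
  set (d := fun k => w k * (M - u k)).
  assert (Hd : forall k, 0 <= d k).
  { intros k; apply Rmult_le_pos; [left; apply Hw | specialize (Hu k); lra]. }
  assert (Hd0 : infinite_sum d 0).
  { apply (infinite_sum_ext (fun k => M * w k - w k * u k)); [intros; unfold d; ring|].
    replace 0 with (M * F - F * M) by ring.
    apply infinite_sum_minus; [apply infinite_sum_scal, HF | exact HS]. }
  assert (Hdj : d j <= 0).
  { apply (Rle_trans _ (sum_f_R0 d j)); [|apply (infinite_sum_partial_le d 0 Hd Hd0)].
    destruct j; simpl; [lra|]; pose proof (cond_pos_sum d j Hd); lra. }
  specialize (Hd j); specialize (Hw j); unfold d in *.
  assert (Hz : w j * (M - u j) = 0) by lra.
  apply Rmult_integral in Hz as [Hz|Hz]; lra.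
Qed.

(* Tonelli for the tails [U n = sum_(j) a (n + j)]: each [a k] occurs in [k + 1] tails. *)
Lemma infinite_sum_of_tails (a U : nat -> R) (P : R) :
  (forall k, 0 <= a k) -> (forall n, infinite_sum (fun j => a (n + j)%nat) (U n)) ->
  infinite_sum U P -> infinite_sum (fun k => INR (S k) * a k) P.
Proof.
  intros Ha HU HP.
  set (b := fun k => INR (S k) * a k).
  assert (Hb : forall k, 0 <= b k).
  { intros k; apply Rmult_le_pos; [apply pos_INR | apply Ha]. }
  assert (HU0 : forall n, 0 <= U n).
  { intros n; apply (Rle_trans _ (sum_f_R0 (fun j => a (n + j)%nat) 0));
      [simpl; apply Ha | apply (infinite_sum_partial_le _ _ (fun j => Ha _) (HU n))]. }
  assert (HUS : forall n, U n = a n + U (S n)).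
  { intros n; pose proof (infinite_sum_tail _ _ 0 (HU n)) as Ht.
    assert (Ht' : infinite_sum (fun j => a (S n + j)%nat) (U n - a n)).
    { simpl in Ht; rewrite Nat.add_0_r in Ht.
      apply (infinite_sum_ext _ _ _ (fun j => f_equal a (Nat.add_succ_r n j)) Ht). }
    pose proof (uniqueness_sum _ _ _ (HU (S n)) Ht'); lra. }
  assert (Hpart : forall N, sum_f_R0 U N = sum_f_R0 b N + INR (S N) * U (S N)).
  { induction N as [|N IH]; simpl sum_f_R0.
    - unfold b; rewrite (HUS O); simpl; ring.
    - rewrite IH, (HUS (S N)); unfold b; rewrite !S_INR; ring. }
  assert (Hbnd : forall N, sum_f_R0 b N <= P).
  { intros N; pose proof (Hpart N); pose proof (infinite_sum_partial_le U P HU0 HP N).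
    pose proof (pos_INR (S N)); pose proof (HU0 (S N)); nra. }
  destruct (infinite_sum_of_bounded b P Hb Hbnd) as [Q HQ].
  assert (Hrem : Un_cv (fun N => INR (S N) * U (S N)) 0).
  { apply (Un_cv_squeeze_0 _ (fun N => Q - sum_f_R0 b N)).
    - intros N; split; [apply Rmult_le_pos; [apply pos_INR | apply HU0]|].
      apply (infinite_sum_le (fun j => INR (S N) * a (S N + j)%nat) (fun j => b (S N + j)%nat)).
      + intros j; unfold b; apply Rmult_le_compat_r; [apply Ha | apply le_INR; lia].
      + apply infinite_sum_scal, HU.
      + apply infinite_sum_tail, HQ.
    - replace 0 with (Q - Q) by ring; apply CV_minus; [apply Un_cv_const | exact HQ]. }
  rewrite infinite_sum_Un_cv.
  apply (Un_cv_ext (fun N => sum_f_R0 U N - INR (S N) * U (S N))); [intros N; rewrite Hpart; ring|].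
  replace P with (P - 0) by ring; apply CV_minus; assumption.
Qed.

(** * Cylinders *)

Definition scat (w : word) (x : Sigma) : Sigma := fold_right scons x w.
Definition shift (n : nat) (x : Sigma) : Sigma := fun i => x (n + i)%nat.
Definition take_word (n : nat) (x : Sigma) : word := map x (seq 0 n).

Lemma scat_nth (w : word) (x : Sigma) (i : nat) :
  (i < length w)%nat -> scat w x i = nth i w false.
Proof.
  revert i; induction w as [|b w IH]; simpl; intros i Hi; [lia|].
  destruct i; simpl; [reflexivity | apply IH; lia].
Qed.

Lemma in_cyl_scat (w : word) (x : Sigma) : in_cyl w (scat w x).
Proof. intros i Hi; apply scat_nth, Hi. Qed.

Lemma in_cyl_cons_scons (b c : bool) (w : word) (x : Sigma) :
  in_cyl (b :: w) (scons c x) <-> c = b /\ in_cyl w x.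
Proof.
  split.
  - intros Hx; split; [apply (Hx O); simpl; lia|].
    intros i Hi; apply (Hx (S i)); simpl; lia.
  - intros [Hc Hw] [|i] Hi; simpl; [exact Hc | apply Hw; simpl in Hi; lia].
Qed.

Lemma in_cyl_scat_app (u v : word) (x : Sigma) : in_cyl v x -> in_cyl (u ++ v) (scat u x).
Proof. induction u as [|b u IH]; simpl; intros Hx; [exact Hx | apply in_cyl_cons_scons; auto]. Qed.

Lemma in_cyl_app_l (u v : word) (x : Sigma) : in_cyl (u ++ v) x -> in_cyl u x.
Proof. intros Hx i Hi; rewrite Hx by (rewrite length_app; lia); apply app_nth1, Hi. Qed.

Lemma in_cyl_snoc (w : word) (b : bool) (x : Sigma) :
  in_cyl (w ++ [b]) x <-> in_cyl w x /\ x (length w) = b.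
Proof.
  split.
  - intros Hx; split; [eapply in_cyl_app_l, Hx|].
    rewrite (Hx (length w)) by (rewrite length_app; simpl; lia); apply nth_middle.
  - intros [Hx Hb] i Hi; rewrite length_app in Hi; simpl in Hi.
    destruct (Nat.lt_ge_cases i (length w)) as [Hlt|Hge].
    + rewrite app_nth1 by exact Hlt; apply Hx, Hlt.
    + replace i with (length w) by lia; rewrite nth_middle; exact Hb.
Qed.

Lemma in_cyl_agree (w : word) (x y : Sigma) : agree (length w) x y -> in_cyl w x -> in_cyl w y.
Proof. intros Hxy Hx i Hi; rewrite <- Hxy; auto. Qed.

Lemma in_cyl_pair (b c : bool) (x : Sigma) : in_cyl [b; c] x <-> x O = b /\ x 1%nat = c.
Proof.
  split.
  - intros Hx; split; [apply (Hx O) | apply (Hx 1%nat)]; simpl; lia.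
  - intros [Hb Hc] [|[|i]] Hi; simpl in *; auto; lia.
Qed.

Lemma scons_shift (x : Sigma) : scons (x O) (shift 1 x) = x.
Proof. extensionality i; destruct i; reflexivity. Qed.

Lemma in_cyl_pair_scons (b c : bool) (x : Sigma) :
  in_cyl [b; c] x -> x = scons b (shift 1 x) /\ shift 1 x O = c.
Proof.
  rewrite in_cyl_pair; intros [Hb Hc]; split; [rewrite <- Hb; symmetry; apply scons_shift | exact Hc].
Qed.

Lemma scat_shift (w : word) (x : Sigma) : in_cyl w x -> x = scat w (shift (length w) x).
Proof.
  revert x; induction w as [|b w IH]; intros x Hx; simpl.
  - extensionality i; reflexivity.
  - rewrite <- (scons_shift x), in_cyl_cons_scons in Hx; destruct Hx as [Hb Hw].
    change (shift (S (length w)) x) with (shift (length w) (shift 1 x)).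
    rewrite <- (IH _ Hw), <- Hb; symmetry; apply scons_shift.
Qed.

Lemma agree_take_word (n : nat) (x y : Sigma) : agree n x (scat (take_word n x) y).
Proof.
  intros i Hi; unfold take_word; rewrite scat_nth by (rewrite length_map, length_seq; lia).
  rewrite nth_indep with (d' := x O) by (rewrite length_map, length_seq; lia).
  rewrite map_nth, seq_nth by lia; reflexivity.
Qed.

Lemma agree_weaken (n m : nat) (x y : Sigma) : (n <= m)%nat -> agree m x y -> agree n x y.
Proof. intros Hnm Hxy i Hi; apply Hxy; lia. Qed.

Lemma in_cylb_spec (w : word) (x : Sigma) : in_cylb w x = true <-> in_cyl w x.
Proof.
  unfold in_cylb, in_cyl.
  (* [in_cylb] is a local fixpoint: generalize it over its starting index. *)
  enough (forall k, (fix go (w : word) (i : nat) : bool :=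
            match w with
            | nil => true
            | b :: w' => andb (Bool.eqb (x i) b) (go w' (S i))
            end) w k = true <->
          forall i, (i < length w)%nat -> x (k + i)%nat = nth i w false) as Hgo.
  { rewrite Hgo; reflexivity. }
  induction w as [|b w IH]; intros k; simpl; [split; intros; [lia | reflexivity]|].
  rewrite Bool.andb_true_iff, Bool.eqb_true_iff, IH; split.
  - intros [Hb Hw] [|i] Hi; [rewrite Nat.add_0_r; exact Hb|].
    rewrite <- Nat.add_succ_comm; apply Hw; lia.
  - intros Hw; split; [rewrite <- (Nat.add_0_r k); apply (Hw O); lia|].
    intros i Hi; rewrite Nat.add_succ_comm; apply (Hw (S i)); lia.
Qed.

Lemma cyl_ind_in (w : word) (x : Sigma) : in_cyl w x -> cyl_ind w x = 1.
Proof. unfold cyl_ind; rewrite <- in_cylb_spec; intros ->; reflexivity. Qed.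

Lemma cyl_ind_out (w : word) (x : Sigma) : ~ in_cyl w x -> cyl_ind w x = 0.
Proof.
  unfold cyl_ind; rewrite <- in_cylb_spec; destruct (in_cylb w x); [tauto | reflexivity].
Qed.

Lemma cyl_ind_bounds (w : word) (x : Sigma) : 0 <= cyl_ind w x <= 1.
Proof. unfold cyl_ind; destruct (in_cylb w x); lra. Qed.

Lemma cyl_ind_agree (w : word) (x y : Sigma) : agree (length w) x y -> cyl_ind w x = cyl_ind w y.
Proof.
  intros Hxy; destruct (classic (in_cyl w x)) as [Hx|Hx].
  - rewrite !cyl_ind_in; [reflexivity | eapply in_cyl_agree; eauto | exact Hx].
  - rewrite !cyl_ind_out; [reflexivity | | exact Hx].
    intros Hy; apply Hx; apply (in_cyl_agree w y); [intros i Hi; symmetry; auto | exact Hy].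
Qed.

Lemma cyl_ind_scons (b c : bool) (w : word) (x : Sigma) :
  cyl_ind (b :: w) (scons c x) = if Bool.eqb c b then cyl_ind w x else 0.
Proof.
  destruct (Bool.eqb_spec c b) as [->|Hcb].
  - destruct (classic (in_cyl w x)) as [Hx|Hx].
    + rewrite !cyl_ind_in; [reflexivity | exact Hx | apply in_cyl_cons_scons; auto].
    + rewrite !cyl_ind_out; [reflexivity | exact Hx | rewrite in_cyl_cons_scons; tauto].
  - apply cyl_ind_out; rewrite in_cyl_cons_scons; tauto.
Qed.

Lemma cyl_ind_snoc (w : word) (x : Sigma) :
  cyl_ind w x = cyl_ind (w ++ [false]) x + cyl_ind (w ++ [true]) x.
Proof.
  destruct (classic (in_cyl w x)) as [Hx|Hx].
  - rewrite (cyl_ind_in w) by exact Hx.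
    destruct (x (length w)) eqn:Hb.
    + rewrite (cyl_ind_out (w ++ [false])), (cyl_ind_in (w ++ [true])); [lra | |];
        rewrite in_cyl_snoc; [tauto | intros [_ Hf]; congruence].
    + rewrite (cyl_ind_in (w ++ [false])), (cyl_ind_out (w ++ [true])); [lra | |];
        rewrite in_cyl_snoc; [intros [_ Hf]; congruence | tauto].
  - rewrite !cyl_ind_out; [lra | | | exact Hx]; intros Hwb; apply Hx; eapply in_cyl_app_l, Hwb.
Qed.

(** * Continuity and compactness *)

Definition depends_on_first (d : nat) (g : Sigma -> R) : Prop :=
  forall x y, agree d x y -> g x = g y.

Lemma depends_on_first_continuous (d : nat) (g : Sigma -> R) :
  depends_on_first d g -> continuous_S g.
Proof.
  intros Hg x eps Heps; exists d; intros y Hxy.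
  rewrite (Hg x y Hxy), Rminus_diag, Rabs_R0; exact Heps.
Qed.

Lemma cyl_ind_depends (w : word) : depends_on_first (length w) (cyl_ind w).
Proof. intros x y; apply cyl_ind_agree. Qed.

Lemma continuous_mul_depends (f g : Sigma -> R) (d : nat) :
  continuous_S f -> depends_on_first d g -> continuous_S (fun x => f x * g x).
Proof.
  intros Hf Hg x eps Heps.
  assert (Hc : 0 < eps / (Rabs (g x) + 1))
    by (apply Rdiv_lt_0_compat; [lra | pose proof (Rabs_pos (g x)); lra]).
  destruct (Hf x _ Hc) as [N HN]; exists (Nat.max N d); intros y Hxy.
  rewrite (Hg y x) by (intros i Hi; symmetry; apply Hxy; lia).
  replace (f y * g x - f x * g x) with ((f y - f x) * g x) by ring.
  rewrite Rabs_mult.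
  assert (Hfy : Rabs (f y - f x) < eps / (Rabs (g x) + 1))
    by (apply HN; eapply agree_weaken; [|exact Hxy]; lia).
  pose proof (Rabs_pos (g x)); pose proof (Rabs_pos (f y - f x)).
  assert (eps / (Rabs (g x) + 1) * (Rabs (g x) + 1) = eps) by (field; lra).
  nra.
Qed.

Section ClusterPoint.
Variable s : nat -> Sigma.

Definition frequent (w : word) : Prop := forall M, exists N, (M <= N)%nat /\ in_cyl w (s N).

Lemma frequent_snoc (w : word) :
  frequent w -> ~ frequent (w ++ [false]) -> frequent (w ++ [true]).
Proof.
  intros Hw Hf M; apply not_all_ex_not in Hf as [M0 HM0].
  destruct (Hw (Nat.max M M0)) as [N [HN Hs]]; exists N; split; [lia|].
  apply in_cyl_snoc; split; [exact Hs|].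
  destruct (s N (length w)) eqn:Hb; [reflexivity|].
  exfalso; apply HM0; exists N; split; [lia | apply in_cyl_snoc; auto].
Qed.

(* König's lemma: descend the binary tree, always keeping a frequent branch. *)
Fixpoint frequent_branch (n : nat) : word :=
  match n with
  | O => []
  | S k => let w := frequent_branch k in
           if excluded_middle_informative (frequent (w ++ [false]))
           then w ++ [false] else w ++ [true]
  end.

Lemma frequent_branch_spec (n : nat) :
  frequent (frequent_branch n) /\ length (frequent_branch n) = n.
Proof.
  induction n as [|n [Hf Hl]]; simpl.
  - split; [intros M; exists M; split; [lia | intros i Hi; simpl in Hi; lia] | reflexivity].
  - destruct (excluded_middle_informative _) as [H0|H0];
      (split; [|rewrite length_app, Hl; simpl; lia]); [exact H0 | apply frequent_snoc; auto].
Qed.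

Lemma frequent_branch_nth (i n : nat) :
  (i < n)%nat -> nth i (frequent_branch n) false = nth i (frequent_branch (S i)) false.
Proof.
  induction 1 as [|n Hin IH]; [reflexivity|].
  rewrite <- IH; simpl; destruct (excluded_middle_informative _);
    apply app_nth1; rewrite (proj2 (frequent_branch_spec n)); exact Hin.
Qed.

Lemma cluster_point : exists z, forall n M, exists N, (M <= N)%nat /\ agree n z (s N).
Proof.
  exists (fun i => nth i (frequent_branch (S i)) false); intros n M.
  destruct (frequent_branch_spec n) as [Hf Hl].
  destruct (Hf M) as [N [HN Hs]]; exists N; split; [exact HN|].
  intros i Hi; rewrite Hs by lia; symmetry; apply frequent_branch_nth, Hi.
Qed.

End ClusterPoint.

Lemma continuous_max_on_cyl (f : Sigma -> R) (w : word) (B : R) :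
  continuous_S f -> (forall x, f x <= B) ->
  exists x0, in_cyl w x0 /\ forall y, in_cyl w y -> f y <= f x0.
Proof.
  intros Hf HB.
  set (E := fun r => exists y, in_cyl w y /\ r = f y).
  assert (HEb : bound E) by (exists B; intros r [y [_ ->]]; apply HB).
  assert (HEne : exists r, E r)
    by (exists (f (scat w (fun _ => false))); eexists; split; [apply in_cyl_scat | reflexivity]).
  destruct (completeness E HEb HEne) as [sup [Hsup Hlub]].
  assert (Happrox : forall n : nat, exists y, in_cyl w y /\ sup - / INR (S n) < f y).
  { intros n; apply NNPP; intros Hn.
    assert (Hlt : 0 < / INR (S n)) by (apply Rinv_0_lt_compat, lt_0_INR; lia).
    enough (sup <= sup - / INR (S n)) by lra.
    apply Hlub; intros r [y [Hy ->]]; apply Rnot_lt_le; intros Hr; apply Hn; eauto. }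
  apply choice in Happrox as [s Hs].
  destruct (cluster_point s) as [z Hz].
  assert (Hzw : in_cyl w z).
  { destruct (Hz (length w) O) as [N [_ HN]].
    apply (in_cyl_agree w (s N)); [intros i Hi; symmetry; auto | apply Hs]. }
  exists z; split; [exact Hzw|].
  assert (Hsupz : sup <= f z).
  { apply Rnot_lt_le; intros Hlt.
    set (eps := (sup - f z) / 2); assert (Heps : 0 < eps) by (unfold eps; lra).
    destruct (Hf z eps Heps) as [N0 HN0].
    destruct (INR_unbounded (/ eps)) as [n0 Hn0].
    destruct (Hz N0 n0) as [N [HN Hagree]].
    specialize (HN0 _ Hagree); destruct (Hs N) as [_ HsN].
    assert (Hinv : / INR (S N) < eps).
    { assert (0 < / eps) by (apply Rinv_0_lt_compat, Heps).
      assert (INR n0 <= INR (S N)) by (apply le_INR; lia).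
      rewrite <- (Rinv_inv eps); apply Rinv_lt_contravar; [apply Rmult_lt_0_compat|]; lra. }
    apply Rabs_def2 in HN0; unfold eps in *; lra. }
  intros y Hy; apply (Rle_trans _ sup); [apply Hsup; exists y; auto | exact Hsupz].
Qed.

Lemma continuous_min_on_cyl (f : Sigma -> R) (w : word) (B : R) :
  continuous_S f -> (forall x, B <= f x) ->
  exists x0, in_cyl w x0 /\ forall y, in_cyl w y -> f x0 <= f y.
Proof.
  intros Hf HB; destruct (continuous_max_on_cyl (fun x => - f x) w (- B)) as [x0 [Hx0 Hmax]].
  - intros x eps Heps; destruct (Hf x eps Heps) as [N HN]; exists N; intros y Hxy.
    rewrite <- Rabs_Ropp; replace (- (- f y - - f x)) with (f y - f x) by ring; auto.
  - intros x; specialize (HB x); lra.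
  - exists x0; split; [exact Hx0 | intros y Hy; specialize (Hmax y Hy); lra].
Qed.

(** * Integrals against cylinder measures *)

Definition sum_over (f : word -> R) (l : list word) : R := fold_right Rplus 0 (map f l).

Lemma sum_over_app (f : word -> R) (l1 l2 : list word) :
  sum_over f (l1 ++ l2) = sum_over f l1 + sum_over f l2.
Proof. unfold sum_over; induction l1; simpl; [lra | rewrite IHl1; lra]. Qed.

Lemma sum_over_map (f : word -> R) (g : word -> word) (l : list word) :
  sum_over f (map g l) = sum_over (fun v => f (g v)) l.
Proof. unfold sum_over; rewrite map_map; reflexivity. Qed.

Lemma sum_over_ext (f g : word -> R) (l : list word) :
  (forall v, In v l -> f v = g v) -> sum_over f l = sum_over g l.
Proof. intros Hfg; unfold sum_over; f_equal; apply map_ext_in, Hfg. Qed.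

Lemma sum_over_plus (f g : word -> R) (l : list word) :
  sum_over (fun v => f v + g v) l = sum_over f l + sum_over g l.
Proof. unfold sum_over; induction l; simpl; lra. Qed.

Lemma sum_over_scal (c : R) (f : word -> R) (l : list word) :
  sum_over (fun v => c * f v) l = c * sum_over f l.
Proof. unfold sum_over; induction l; simpl; lra. Qed.

Lemma sum_over_le (f g : word -> R) (l : list word) :
  (forall v, f v <= g v) -> sum_over f l <= sum_over g l.
Proof. intros Hfg; unfold sum_over; induction l as [|v l IH]; simpl; [lra | specialize (Hfg v); lra]. Qed.

Lemma words_length (n : nat) (v : word) : In v (words n) -> length v = n.
Proof.
  revert v; induction n as [|n IH]; simpl; intros v Hv.
  - destruct Hv as [<-|[]]; reflexivity.
  - apply in_app_or in Hv as [Hv|Hv]; apply in_map_iff in Hv as [u [<- Hu]]; simpl; f_equal; auto.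
Qed.

Lemma sum_over_words_S (f : word -> R) (n : nat) :
  sum_over f (words (S n)) = sum_over (fun v => f (v ++ [false]) + f (v ++ [true])) (words n).
Proof.
  revert f; induction n as [|n IH]; intros f; [unfold sum_over; simpl; lra|].
  change (words (S (S n))) with (map (cons false) (words (S n)) ++ map (cons true) (words (S n))).
  rewrite sum_over_app, !sum_over_map, (IH (fun v => f (false :: v))), (IH (fun v => f (true :: v))).
  change (words (S n)) with (map (cons false) (words n) ++ map (cons true) (words n)).
  rewrite sum_over_app, !sum_over_map; reflexivity.
Qed.

Lemma ext_cons (b : bool) (v : word) : ext (b :: v) = scons b (ext v).
Proof. extensionality i; destruct i; reflexivity. Qed.

Lemma sum_over_words_cyl (w : word) (f : word -> R) :
  sum_over (fun v => cyl_ind w (ext v) * f v) (words (length w)) = f w.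
Proof.
  revert f; induction w as [|b w IH]; intros f; [unfold sum_over, cyl_ind; simpl; lra|].
  change (words (length (b :: w)))
    with (map (cons false) (words (length w)) ++ map (cons true) (words (length w))).
  rewrite sum_over_app, !sum_over_map.
  assert (Hcons : forall c v, cyl_ind (b :: w) (ext (c :: v))
                              = if Bool.eqb c b then cyl_ind w (ext v) else 0)
    by (intros; rewrite ext_cons; apply cyl_ind_scons).
  rewrite (sum_over_ext _ (fun v => (if Bool.eqb false b then cyl_ind w (ext v) else 0) * f (false :: v)))
    by (intros; rewrite Hcons; reflexivity).
  rewrite (sum_over_ext (fun v => cyl_ind (b :: w) (ext (true :: v)) * f (true :: v))
             (fun v => (if Bool.eqb true b then cyl_ind w (ext v) else 0) * f (true :: v)))
    by (intros; rewrite Hcons; reflexivity).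
  destruct b; simpl; rewrite IH, sum_over_scal; ring.
Qed.

Lemma riemann_sum_sum_over (m : word -> R) (g : Sigma -> R) (n : nat) :
  riemann_sum m g n = sum_over (fun w => g (ext w) * m w) (words n).
Proof. reflexivity. Qed.

Section CylinderIntegral.
Variable m : word -> R.
Hypothesis hm : prob_on_cyl m.

Lemma riemann_sum_stable (d : nat) (g : Sigma -> R) (n : nat) :
  depends_on_first d g -> (d <= n)%nat -> riemann_sum m g n = riemann_sum m g d.
Proof.
  intros Hg Hdn; induction Hdn as [|n Hdn IH]; [reflexivity|]; rewrite <- IH.
  rewrite !riemann_sum_sum_over, sum_over_words_S; apply sum_over_ext; intros v Hv.
  apply words_length in Hv.
  assert (Hext : forall b, g (ext (v ++ [b])) = g (ext v)).
  { intros b; apply Hg; intros i Hi; unfold ext; apply app_nth1; lia. }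
  destruct hm as [_ [_ Hsplit]]; rewrite (Hsplit v), !Hext; ring.
Qed.

Lemma is_integral_depends (d : nat) (g : Sigma -> R) :
  depends_on_first d g -> is_integral m g (riemann_sum m g d).
Proof.
  intros Hg eps Heps; exists d; intros n Hn; unfold R_dist.
  rewrite (riemann_sum_stable d g n Hg Hn), Rminus_diag, Rabs_R0; exact Heps.
Qed.

Lemma is_integral_cyl (w : word) : is_integral m (cyl_ind w) (m w).
Proof.
  pose proof (is_integral_depends _ _ (cyl_ind_depends w)) as Hw.
  rewrite riemann_sum_sum_over, sum_over_words_cyl in Hw; exact Hw.
Qed.

Lemma is_integral_ext (g h : Sigma -> R) (I : R) :
  (forall x, g x = h x) -> is_integral m g I -> is_integral m h I.
Proof.
  intros Hgh; apply Un_cv_ext; intros n; rewrite !riemann_sum_sum_over.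
  apply sum_over_ext; intros; rewrite Hgh; reflexivity.
Qed.

Lemma is_integral_unique (g : Sigma -> R) (I J : R) :
  is_integral m g I -> is_integral m g J -> I = J.
Proof. apply UL_sequence. Qed.

Lemma is_integral_scal (c : R) (g : Sigma -> R) (I : R) :
  is_integral m g I -> is_integral m (fun x => c * g x) (c * I).
Proof.
  intros Hg; apply (Un_cv_ext (fun n => c * riemann_sum m g n));
    [|apply CV_mult; [apply Un_cv_const | exact Hg]].
  intros n; rewrite !riemann_sum_sum_over, <- sum_over_scal; apply sum_over_ext; intros; ring.
Qed.

Lemma is_integral_plus (g h : Sigma -> R) (I J : R) :
  is_integral m g I -> is_integral m h J -> is_integral m (fun x => g x + h x) (I + J).
Proof.
  intros Hg Hh; apply (Un_cv_ext (fun n => riemann_sum m g n + riemann_sum m h n));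
    [|apply CV_plus; assumption].
  intros n; rewrite !riemann_sum_sum_over, <- sum_over_plus; apply sum_over_ext; intros; ring.
Qed.

Lemma is_integral_le (g h : Sigma -> R) (I J : R) :
  (forall x, g x <= h x) -> is_integral m g I -> is_integral m h J -> I <= J.
Proof.
  intros Hgh Hg Hh; eapply Rle_cv_lim; [|exact Hg | exact Hh]; intros n.
  rewrite !riemann_sum_sum_over; apply sum_over_le; intros v.
  destruct hm as [_ [Hpos _]]; apply Rmult_le_compat_r; auto.
Qed.

End CylinderIntegral.

(** * The eigenfunction *)

Definition depth (H0 H1 : nat -> R) (c : bool) : nat -> R := if c then H1 else H0.

Definition run (b : bool) (n : nat) (y : Sigma) : Sigma := scat (repeat b n) y.

Lemma tail_summable_bounded (h : nat -> R) : tail_summable h -> exists C, forall n, h (S n) <= C.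
Proof.
  intros [d [Hd _]]; exists (h 1%nat + d 1%nat); intros n.
  assert (Hosc : Rabs (h 1%nat - h (1 + n)%nat) <= d 1%nat)
    by (apply (proj1 (Hd 1%nat)); exists n; reflexivity).
  pose proof (Rle_abs (h (S n) - h 1%nat)) as Hle; rewrite Rabs_minus_sym in Hle; simpl in *; lra.
Qed.

Section Eigenfunction.
Context {H : Sigma -> R} {H0 H1 : nat -> R} {beta lam : R} {Phi : Sigma -> R}.
Hypotheses (hH : reduced_double_well H H0 H1) (hbeta : 0 < beta)
  (hPhi : is_eigenfunction beta H lam Phi).

Local Notation Fw c := (Fterm beta lam (depth H0 H1 c)).

Lemma Phi_continuous : continuous_S Phi.
Proof. apply hPhi. Qed.
Lemma Phi_pos (x : Sigma) : 0 < Phi x.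
Proof. apply hPhi. Qed.
Lemma Phi_le_1 (x : Sigma) : Phi x <= 1.
Proof. apply hPhi. Qed.
Lemma Phi_eigen (x : Sigma) : transfer beta H Phi x = lam * Phi x.
Proof. apply hPhi. Qed.

Lemma H_diag (x : Sigma) : x O = x 1%nat -> H x = 0.
Proof. apply hH. Qed.

Lemma H_well (b : bool) (n : nat) (x : Sigma) :
  (1 <= n)%nat -> in_cyl (b :: repeat (negb b) n ++ [b]) x -> H x = depth H0 H1 b n.
Proof.
  destruct hH as (_ & _ & _ & _ & H0x & H1x & _); intros Hn Hx.
  destruct b; [apply H1x | apply H0x]; assumption.
Qed.

Lemma lam_pos : 0 < lam.
Proof.
  set (x := fun _ : nat => false); pose proof (Phi_eigen x) as Heig; unfold transfer in Heig.
  pose proof (Phi_pos x); pose proof (Phi_pos (scons false x)); pose proof (Phi_pos (scons true x)).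
  pose proof (exp_pos (- beta * H (scons false x))); pose proof (exp_pos (- beta * H (scons true x))).
  nra.
Qed.

Lemma Fterm_pos (c : bool) (k : nat) : 0 < Fw c k.
Proof. apply Rmult_lt_0_compat; [apply Rinv_0_lt_compat, pow_lt, lam_pos | apply exp_pos]. Qed.

Lemma Phi_run_step (b : bool) (n : nat) (y : Sigma) : y O = negb b ->
  / lam ^ n * Phi (run b (S n) y)
  = Fw (negb b) (S n) * Phi (scons (negb b) (run b (S n) y))
    + / lam ^ S n * Phi (run b (S (S n)) y).
Proof.
  intros Hy; set (x := run b (S n) y).
  assert (Hstay : H (scons b x) = 0) by (apply H_diag; reflexivity).
  assert (Hleave : H (scons (negb b) x) = depth H0 H1 (negb b) (S n)).
  { apply H_well; [lia|]; rewrite Bool.negb_involutive; apply in_cyl_cons_scons; split; [reflexivity|].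
    apply in_cyl_scat_app; intros [|i] Hi; simpl in *; [exact Hy | lia]. }
  assert (Heig : lam * Phi x
                 = Phi (scons b x) + exp (- beta * depth H0 H1 (negb b) (S n)) * Phi (scons (negb b) x)).
  { rewrite <- Phi_eigen, <- Hleave; unfold transfer.
    destruct b; simpl negb in *; rewrite Hstay, Rmult_0_r, exp_0; ring. }
  change (run b (S (S n)) y) with (scons b x).
  pose proof lam_pos; pose proof (pow_lt lam n ltac:(lra)).
  unfold Fterm; simpl pow; apply (Rmult_eq_reg_l (lam ^ n * lam)); [|nra].
  field_simplify; [rewrite Heig; ring | lra | lra].
Qed.

Lemma Phi_run_partial (b : bool) (n : nat) (y : Sigma) (J : nat) : y O = negb b ->
  / lam ^ n * Phi (run b (S n) y)
  = sum_f_R0 (fun j => Fw (negb b) (S n + j) * Phi (scons (negb b) (run b (S n + j) y))) J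
    + / lam ^ (S n + J) * Phi (run b (S (S n + J)) y).
Proof.
  intros Hy; induction J as [|J IH].
  - simpl sum_f_R0; rewrite !Nat.add_0_r; apply Phi_run_step, Hy.
  - rewrite IH, (Phi_run_step b (S n + J) y Hy), tech5; cbv beta; rewrite Nat.add_succ_r; ring.
Qed.

Lemma Phi_lower_bound : exists c, 0 < c /\ forall x, c <= Phi x.
Proof.
  destruct (continuous_min_on_cyl Phi [] 0 Phi_continuous (fun x => Rlt_le _ _ (Phi_pos x)))
    as [x0 [_ Hmin]].
  exists (Phi x0); split; [apply Phi_pos | intros x; apply Hmin; intros i Hi; simpl in Hi; lia].
Qed.

Lemma Fterm_partial_bounded (b : bool) :
  exists B, forall J, sum_f_R0 (fun j => Fw (negb b) (S j)) J <= B.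
Proof.
  destruct Phi_lower_bound as [c [Hc Hcx]]; exists (/ c); intros J.
  set (y := fun _ : nat => negb b).
  pose proof (Phi_run_partial b 0 y J eq_refl) as Hexp.
  assert (Hrem : 0 <= / lam ^ (1 + J) * Phi (run b (S (1 + J)) y)).
  { apply Rmult_le_pos; [left; apply Rinv_0_lt_compat, pow_lt, lam_pos | left; apply Phi_pos]. }
  assert (Hlow : c * sum_f_R0 (fun j => Fw (negb b) (S j)) J
                 <= sum_f_R0 (fun j => Fw (negb b) (1 + j) * Phi (scons (negb b) (run b (1 + j) y))) J).
  { rewrite scal_sum; apply sum_Rle; intros j _.
    apply Rmult_le_compat_l; [left; apply Fterm_pos | apply Hcx]. }
  pose proof (Phi_le_1 (run b 1 y)); rewrite pow_O, Rinv_1 in Hexp.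
  apply (Rmult_le_reg_l c); [exact Hc|]; rewrite Rinv_r by lra; lra.
Qed.

Lemma lam_gt_1 : 1 < lam.
Proof.
  apply Rnot_le_lt; intros Hlam; pose proof lam_pos as Hlam0.
  destruct hH as (_ & _ & _ & _ & _ & _ & _ & _ & _ & Htail1).
  destruct (tail_summable_bounded H1 Htail1) as [C HC].
  destruct (Fterm_partial_bounded false) as [B HB].
  set (d := exp (- beta * C)); assert (Hd : 0 < d) by apply exp_pos.
  assert (Hterm : forall j, d <= Fw (negb false) (S j)).
  { intros j; unfold Fterm; simpl depth; rewrite <- (Rmult_1_l d); apply Rmult_le_compat; [lra | lra | |].
    - pose proof (pow_lt lam (S j) Hlam0).
      assert (lam ^ S j <= 1) by (rewrite <- (pow1 (S j)); apply pow_incr; lra).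
      rewrite <- Rinv_1; apply Rinv_le_contravar; lra.
    - assert (Hle : - beta * C <= - beta * H1 (S j)) by (specialize (HC j); nra).
      destruct Hle as [Hlt|Heq]; [left; apply exp_increasing, Hlt | unfold d; rewrite Heq; lra]. }
  destruct (INR_unbounded (B / d)) as [J HJ].
  pose proof (HB J) as HBJ.
  pose proof (sum_Rle (fun _ => d) _ J (fun j _ => Hterm j)) as Hsum; rewrite sum_cte in Hsum.
  assert (INR J <= INR (S J)) by (apply le_INR; lia).
  assert (B < d * INR (S J)); [|lra].
  apply (Rmult_lt_reg_l (/ d)); [apply Rinv_0_lt_compat, Hd|].
  replace (/ d * (d * INR (S J))) with (INR (S J)) by (field; lra).
  unfold Rdiv in HJ; lra.
Qed.

Lemma F_exists : exists F : bool -> R, forall c, infinite_sum (fun k => Fw c (S k)) (F c).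
Proof.
  apply (choice (fun c F => infinite_sum (fun k => Fw c (S k)) F)); intros c.
  destruct (Fterm_partial_bounded (negb c)) as [B HB]; rewrite Bool.negb_involutive in HB.
  apply (infinite_sum_of_bounded _ B); [intros k; left; apply Fterm_pos | exact HB].
Qed.

Lemma Phi_run_series (b : bool) (n : nat) (y : Sigma) : y O = negb b ->
  infinite_sum (fun j => Fw (negb b) (S n + j) * Phi (scons (negb b) (run b (S n + j) y)))
    (/ lam ^ n * Phi (run b (S n) y)).
Proof.
  intros Hy; rewrite infinite_sum_Un_cv.
  apply (Un_cv_ext (fun J => / lam ^ n * Phi (run b (S n) y)
                             - / lam ^ (S n + J) * Phi (run b (S (S n + J)) y))).
  { intros J; rewrite (Phi_run_partial b n y J Hy); ring. }
  assert (Hrem : Un_cv (fun J => / lam ^ (S n + J) * Phi (run b (S (S n + J)) y)) 0).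
  { apply (Un_cv_squeeze_0 _ (fun J => / lam ^ (S n + J))).
    - intros J; pose proof (Rinv_0_lt_compat _ (pow_lt lam (S n + J) lam_pos)).
      pose proof (Phi_pos (run b (S (S n + J)) y)); pose proof (Phi_le_1 (run b (S (S n + J)) y)).
      split; nra.
    - apply (Un_cv_ext (fun J => / lam ^ (J + S n))); [intros J; rewrite Nat.add_comm; reflexivity|].
      apply (CV_shift' (fun J => / lam ^ J)), Un_cv_inv_pow, lam_gt_1. }
  pose proof (CV_minus _ _ _ _ (Un_cv_const (/ lam ^ n * Phi (run b (S n) y))) Hrem) as Hlim.
  rewrite Rminus_0_r in Hlim; exact Hlim.
Qed.

Lemma Phi_head_series (b : bool) (y : Sigma) : y O = negb b ->
  infinite_sum (fun j => Fw (negb b) (S j) * Phi (scons (negb b) (run b (S j) y))) (Phi (scons b y)).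
Proof.
  intros Hy; pose proof (Phi_run_series b 0 y Hy) as Hs.
  rewrite pow_O, Rinv_1, Rmult_1_l in Hs; exact Hs.
Qed.

Section WellSums.
Variable F : bool -> R.
Hypothesis hF : forall c, infinite_sum (fun k => Fw c (S k)) (F c).

Lemma F_pos (c : bool) : 0 < F c.
Proof. apply (infinite_sum_pos _ _ (fun k => Rlt_le _ _ (Fterm_pos c (S k))) (Fterm_pos c 1) (hF c)). Qed.

Lemma in_cyl_pair_run (b : bool) (j : nat) (y : Sigma) :
  in_cyl [negb b; b] (scons (negb b) (run b (S j) y)).
Proof. apply in_cyl_pair; split; reflexivity. Qed.

Lemma Phi_pair_le (b : bool) (M : R) :
  (forall x, in_cyl [negb b; b] x -> Phi x <= M) ->
  forall x, in_cyl [b; negb b] x -> Phi x <= F (negb b) * M.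
Proof.
  intros HM x Hx; destruct (in_cyl_pair_scons _ _ _ Hx) as [-> Hy].
  apply (infinite_sum_mul_le _ _ _ _ _ (fun j => Rlt_le _ _ (Fterm_pos _ _))
           (fun j => HM _ (in_cyl_pair_run b j _)) (hF _) (Phi_head_series b _ Hy)).
Qed.

Lemma Phi_pair_ge (b : bool) (m : R) :
  (forall x, in_cyl [negb b; b] x -> m <= Phi x) ->
  forall x, in_cyl [b; negb b] x -> F (negb b) * m <= Phi x.
Proof.
  intros Hm x Hx; destruct (in_cyl_pair_scons _ _ _ Hx) as [-> Hy].
  apply (infinite_sum_mul_ge _ _ _ _ _ (fun j => Rlt_le _ _ (Fterm_pos _ _))
           (fun j => Hm _ (in_cyl_pair_run b j _)) (hF _) (Phi_head_series b _ Hy)).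
Qed.

(* Comparing the maxima, resp. minima, of Phi on [0 1] and [1 0]. *)
Lemma F_prod : F false * F true = 1.
Proof.
  pose proof (fun w => continuous_max_on_cyl Phi w 1 Phi_continuous Phi_le_1) as Hmax.
  pose proof (fun w => continuous_min_on_cyl Phi w 0 Phi_continuous (fun x => Rlt_le _ _ (Phi_pos x)))
    as Hmin.
  destruct (Hmax [false; true]) as [M0 [HM0 HmaxM0]]; destruct (Hmax [true; false]) as [M1 [HM1 HmaxM1]].
  destruct (Hmin [false; true]) as [m0 [Hm0 Hminm0]]; destruct (Hmin [true; false]) as [m1 [Hm1 Hminm1]].
  pose proof (Phi_pair_le false _ HmaxM1 M0 HM0); pose proof (Phi_pair_le true _ HmaxM0 M1 HM1).
  pose proof (Phi_pair_ge false _ Hminm1 m0 Hm0); pose proof (Phi_pair_ge true _ Hminm0 m1 Hm1).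
  simpl negb in *; pose proof (F_pos false); pose proof (F_pos true).
  pose proof (Phi_pos M0); pose proof (Phi_pos m0).
  assert (Phi M0 <= F true * F false * Phi M0) by nra.
  assert (F true * F false * Phi m0 <= Phi m0) by nra.
  nra.
Qed.

Lemma F_mul_negb (b : bool) : F b * F (negb b) = 1.
Proof. destruct b; simpl; [rewrite Rmult_comm|]; apply F_prod. Qed.

Lemma F_inv_negb (b : bool) : F b = / F (negb b).
Proof.
  pose proof (F_mul_negb b); pose proof (F_pos (negb b)).
  apply (Rmult_eq_reg_r (F (negb b))); [rewrite Rinv_l; lra | lra].
Qed.

Lemma Phi_max_propagates (b : bool) (y : Sigma) (M : R) : y O = negb b ->
  (forall x, in_cyl [negb b; b] x -> Phi x <= M) -> Phi (scons b y) = F (negb b) * M ->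
  forall j, Phi (scons (negb b) (run b (S j) y)) = M.
Proof.
  intros Hy HM Heq.
  apply (infinite_sum_mul_eq (fun j => Fw (negb b) (S j)) _ (F (negb b)) M
           (fun j => Fterm_pos _ _) (fun j => HM _ (in_cyl_pair_run b j _)) (hF _)).
  rewrite <- Heq; apply Phi_head_series, Hy.
Qed.

Section Propagation.
Variable V : bool -> R.
Hypothesis hV : forall b y, y O = negb b -> Phi (scons b y) = V b ->
  forall j, Phi (scons (negb b) (run b (S j) y)) = V (negb b).

Definition anchored (x : Sigma) : Prop :=
  exists b n y, y O = negb b /\ Phi (scons b y) = V b /\ x = run b (S n) y.

Lemma anchored_scons (c : bool) (x : Sigma) : anchored x -> anchored (scons c x).
Proof.
  intros (b & n & y & Hy & HVb & ->); destruct (Bool.eqb_spec c b) as [->|Hcb].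
  - exists b, (S n), y; repeat split; assumption.
  - replace c with (negb b) by (destruct b, c; simpl; congruence).
    exists (negb b), O, (run b (S n) y); repeat split.
    + rewrite Bool.negb_involutive; reflexivity.
    + apply hV; assumption.
Qed.

Lemma anchored_scat (p : word) (x : Sigma) : anchored x -> anchored (scat p x).
Proof. induction p as [|c p IH]; simpl; [auto | intros Hx; apply anchored_scons, IH, Hx]. Qed.

Lemma anchored_pair (b : bool) (x : Sigma) :
  anchored x -> x O = b -> x 1%nat = negb b -> Phi x = V b.
Proof.
  intros (b' & [|n] & y & Hy & HVb & ->) Hb Hnb; unfold run in Hb, Hnb; simpl in Hb, Hnb.
  - subst b'; exact HVb.
  - destruct b, b'; discriminate.
Qed.

(* [anchored] is closed under prepending letters, hence dense once inhabited. *)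
Lemma Phi_eq_V (b : bool) (x : Sigma) :
  (exists x0, anchored x0) -> x O = b -> x 1%nat = negb b -> Phi x = V b.
Proof.
  intros [x0 Hx0] Hb Hnb; symmetry; apply cond_eq; intros eps Heps.
  destruct (Phi_continuous x eps Heps) as [N HN].
  set (z := scat (take_word (Nat.max N 2) x) x0).
  assert (Hz : agree (Nat.max N 2) x z) by apply agree_take_word.
  assert (HVz : Phi z = V b).
  { apply anchored_pair; [apply anchored_scat, Hx0 | |]; rewrite <- Hz by lia; assumption. }
  rewrite <- HVz; apply HN, (agree_weaken N (Nat.max N 2)); [lia | exact Hz].
Qed.

End Propagation.

Lemma Phi_pair_max_rec (xM : bool -> Sigma) :
  (forall c, in_cyl [c; negb c] (xM c) /\ forall x, in_cyl [c; negb c] x -> Phi x <= Phi (xM c)) ->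
  forall c, Phi (xM c) = F (negb c) * Phi (xM (negb c)).
Proof.
  intros HxM c.
  assert (HVle : forall x, in_cyl [negb c; c] x -> Phi x <= Phi (xM (negb c))).
  { intros x Hx; apply HxM; rewrite Bool.negb_involutive; exact Hx. }
  apply Rle_antisym; [apply (Phi_pair_le c _ HVle), HxM|].
  pose proof (Phi_pair_le (negb c) (Phi (xM c))) as Hle; rewrite Bool.negb_involutive in Hle.
  pose proof (proj1 (HxM (negb c))) as Hin; rewrite Bool.negb_involutive in Hin.
  specialize (Hle (proj2 (HxM c)) _ Hin).
  rewrite <- (Rmult_1_l (Phi (xM c))), <- (F_mul_negb c), (Rmult_comm (F c)), Rmult_assoc.
  apply Rmult_le_compat_l; [left; apply F_pos | exact Hle].
Qed.

Definition K (b : bool) : R := Phi (scons b (fun _ => negb b)).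

Lemma Phi_pair_const (b : bool) (x : Sigma) : x O = b -> x 1%nat = negb b -> Phi x = K b.
Proof.
  assert (Hmax : forall c, exists xM, in_cyl [c; negb c] xM
                   /\ forall x, in_cyl [c; negb c] x -> Phi x <= Phi xM)
    by (intros c; apply (continuous_max_on_cyl _ _ 1 Phi_continuous Phi_le_1)).
  apply choice in Hmax as [xM HxM].
  set (V := fun c => Phi (xM c)).
  assert (Hprop : forall c y, y O = negb c -> Phi (scons c y) = V c ->
                    forall j, Phi (scons (negb c) (run c (S j) y)) = V (negb c)).
  { intros c y Hy HVc; apply Phi_max_propagates; [exact Hy | |].
    - intros x' Hx'; apply HxM; rewrite Bool.negb_involutive; exact Hx'.
    - rewrite HVc; exact (Phi_pair_max_rec xM HxM c). }
  assert (Hstart : exists x0, anchored V x0).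
  { exists (xM false); destruct (in_cyl_pair_scons _ _ _ (proj1 (HxM false))) as [Hx Hy].
    exists false, O, (shift 1 (xM false)); repeat split; [exact Hy | rewrite <- Hx; reflexivity | exact Hx]. }
  intros Hb Hnb; unfold K; rewrite !(Phi_eq_V V Hprop b); auto.
Qed.

Lemma K_pos (b : bool) : 0 < K b.
Proof. apply Phi_pos. Qed.

Lemma Phi_pair_run (b : bool) (j : nat) (y : Sigma) :
  Phi (scons (negb b) (run b (S j) y)) = K (negb b).
Proof. apply Phi_pair_const; [reflexivity | symmetry; apply Bool.negb_involutive]. Qed.

Lemma K_rec (b : bool) : K b = F (negb b) * K (negb b).
Proof.
  apply (uniqueness_sum _ _ _ (Phi_head_series b (fun _ => negb b) eq_refl)).
  rewrite (Rmult_comm (F _)); apply (infinite_sum_ext (fun j => K (negb b) * Fw (negb b) (S j)));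
    [intros j; rewrite Phi_pair_run; ring | apply infinite_sum_scal, hF].
Qed.

Lemma Phi_on_run (b : bool) (n : nat) (y : Sigma) (T : R) : y O = negb b ->
  infinite_sum (fun j => Fw (negb b) (S n + j)) T -> Phi (run b (S n) y) = lam ^ n * T * K (negb b).
Proof.
  intros Hy HT.
  assert (Hscaled : / lam ^ n * Phi (run b (S n) y) = T * K (negb b)).
  { apply (uniqueness_sum _ _ _ (Phi_run_series b n y Hy)); rewrite (Rmult_comm T).
    apply (infinite_sum_ext (fun j => K (negb b) * Fw (negb b) (S n + j)));
      [intros j; rewrite (Phi_pair_run b (n + j)); ring | apply infinite_sum_scal, HT]. }
  pose proof (pow_lt lam n lam_pos); rewrite Rmult_assoc, <- Hscaled; field; lra.
Qed.

(** * The eigenmeasure and the Gibbs measure *)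

Section Measures.
Context {nu mu : word -> R} {Z : R}.
Hypotheses (hnu : is_eigenmeasure beta H lam nu) (hZ : is_integral nu Phi Z)
  (hmu : forall w, exists I, is_integral nu (fun x => Phi x * cyl_ind w x) I /\ mu w = I / Z).

Lemma nu_prob : prob_on_cyl nu.
Proof. apply hnu. Qed.

Lemma nu_scons (b : bool) (w : word) (h : R) :
  (forall x, in_cyl w x -> H (scons b x) = h) -> lam * nu (b :: w) = exp (- beta * h) * nu w.
Proof.
  intros Hh.
  assert (Htransfer : forall x, transfer beta H (cyl_ind (b :: w)) x = exp (- beta * h) * cyl_ind w x).
  { intros x; unfold transfer; rewrite !cyl_ind_scons.
    destruct (classic (in_cyl w x)) as [Hx|Hx]; [rewrite <- (Hh x Hx) | rewrite (cyl_ind_out w x Hx)];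
      destruct b; simpl; ring. }
  apply (is_integral_unique nu (transfer beta H (cyl_ind (b :: w)))).
  - apply (proj2 hnu); [apply (depends_on_first_continuous _ _ (cyl_ind_depends _))|].
    apply is_integral_cyl, nu_prob.
  - apply (is_integral_ext nu (fun x => exp (- beta * h) * cyl_ind w x));
      [intros; symmetry; apply Htransfer | apply is_integral_scal, is_integral_cyl, nu_prob].
Qed.

Lemma nu_repeat (b : bool) (n : nat) (u : word) : nu (repeat b (S n) ++ u) = / lam ^ n * nu (b :: u).
Proof.
  pose proof lam_pos; induction n as [|n IH]; [simpl; rewrite Rinv_1; ring|].
  assert (Hstay : lam * nu (b :: repeat b (S n) ++ u) = exp (- beta * 0) * nu (repeat b (S n) ++ u)).
  { apply nu_scons; intros x Hx; apply H_diag; symmetry; apply (Hx O); simpl; lia. }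
  rewrite Rmult_0_r, exp_0, Rmult_1_l, IH in Hstay.
  change (repeat b (S (S n)) ++ u) with (b :: repeat b (S n) ++ u).
  pose proof (pow_lt lam n ltac:(lra)); simpl pow.
  apply (Rmult_eq_reg_l lam); [rewrite Hstay; field; lra | lra].
Qed.

Lemma nu_well (b : bool) (n : nat) :
  nu (b :: repeat (negb b) (S n) ++ [b]) = Fw b (S n) * nu [negb b; b].
Proof.
  assert (Hwell : lam * nu (b :: repeat (negb b) (S n) ++ [b])
                  = exp (- beta * depth H0 H1 b (S n)) * nu (repeat (negb b) (S n) ++ [b])).
  { apply nu_scons; intros x Hx; apply H_well; [lia | apply in_cyl_cons_scons; auto]. }
  rewrite nu_repeat in Hwell.
  pose proof lam_pos; pose proof (pow_lt lam n ltac:(lra)).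
  unfold Fterm; simpl pow; apply (Rmult_eq_reg_l lam); [rewrite Hwell; field; lra | lra].
Qed.

Lemma nu_pair (b : bool) : nu [b; negb b] = (1 - / lam) * nu [b].
Proof.
  destruct nu_prob as (_ & _ & Hsplit).
  pose proof (Hsplit [b]) as Hb; pose proof (nu_repeat b 1 []) as Hbb.
  rewrite app_nil_r, pow_1 in Hbb; destruct b; simpl in *; lra.
Qed.

Lemma mu_integral (w : word) (I : R) :
  is_integral nu (fun x => Phi x * cyl_ind w x) I -> mu w = I / Z.
Proof.
  intros HI; destruct (hmu w) as [I' [HI' ->]].
  rewrite (is_integral_unique nu _ _ _ HI' HI); reflexivity.
Qed.

Lemma Z_pos : 0 < Z.
Proof.
  destruct Phi_lower_bound as [c [Hc Hcx]].
  apply (Rlt_le_trans _ c Z Hc).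
  replace c with (c * nu []) by (destruct nu_prob as [-> _]; ring).
  apply (is_integral_le nu nu_prob (fun x => c * cyl_ind [] x) Phi);
    [|apply is_integral_scal, is_integral_cyl, nu_prob | exact hZ].
  intros x; unfold cyl_ind; simpl; rewrite Rmult_1_r; apply Hcx.
Qed.

Lemma mu_const (w : word) (k : R) : (forall x, in_cyl w x -> Phi x = k) -> mu w = k * nu w / Z.
Proof.
  intros Hk; apply mu_integral.
  apply (is_integral_ext nu (fun x => k * cyl_ind w x)); [|apply is_integral_scal, is_integral_cyl, nu_prob].
  intros x; destruct (classic (in_cyl w x)) as [Hx|Hx]; [rewrite Hk | rewrite cyl_ind_out]; auto; ring.
Qed.

Lemma mu_bounds (w : word) : 0 <= mu w <= nu w / Z.
Proof.
  destruct (hmu w) as [I [HI ->]]; pose proof (Rinv_0_lt_compat _ Z_pos).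
  enough (0 <= I <= nu w) by (unfold Rdiv; split; nra).
  split.
  - replace 0 with (0 * nu w) by ring.
    apply (is_integral_le nu nu_prob (fun x => 0 * cyl_ind w x) (fun x => Phi x * cyl_ind w x));
      [| apply is_integral_scal, is_integral_cyl, nu_prob | exact HI].
    intros x; pose proof (Phi_pos x); pose proof (cyl_ind_bounds w x); nra.
  - apply (is_integral_le nu nu_prob (fun x => Phi x * cyl_ind w x) (cyl_ind w));
      [| exact HI | apply is_integral_cyl, nu_prob].
    intros x; pose proof (Phi_le_1 x); pose proof (cyl_ind_bounds w x); nra.
Qed.

Lemma mu_split (w : word) : mu w = mu (w ++ [false]) + mu (w ++ [true]).
Proof.
  destruct (hmu (w ++ [false])) as [I0 [HI0 ->]]; destruct (hmu (w ++ [true])) as [I1 [HI1 ->]].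
  rewrite (mu_integral w (I0 + I1)); [unfold Rdiv; ring|].
  apply (is_integral_ext nu (fun x => Phi x * cyl_ind (w ++ [false]) x + Phi x * cyl_ind (w ++ [true]) x));
    [intros x; rewrite (cyl_ind_snoc w x); ring | apply is_integral_plus; assumption].
Qed.

(* Integrate L_beta (Phi * (1_[w] o shift)) = lambda * Phi * 1_[w] against nu. *)
Lemma mu_shift (w : word) : mu (false :: w) + mu (true :: w) = mu w.
Proof.
  destruct (hmu (false :: w)) as [I0 [HI0 ->]]; destruct (hmu (true :: w)) as [I1 [HI1 ->]].
  set (g := fun x => Phi x * cyl_ind w (shift 1 x)).
  assert (Hg : is_integral nu g (I0 + I1)).
  { apply (is_integral_ext nu (fun x => Phi x * cyl_ind (false :: w) x + Phi x * cyl_ind (true :: w) x));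
      [intros x | apply is_integral_plus; assumption].
    assert (Hx : forall c, cyl_ind (c :: w) x = if Bool.eqb (x O) c then cyl_ind w (shift 1 x) else 0)
      by (intros c; rewrite <- cyl_ind_scons, scons_shift; reflexivity).
    unfold g; rewrite !Hx; destruct (x O); simpl; ring. }
  assert (Hgc : continuous_S g).
  { apply (continuous_mul_depends _ _ (S (length w)) Phi_continuous).
    intros x y Hxy; apply cyl_ind_agree; intros i Hi; apply Hxy; lia. }
  assert (HLg : is_integral nu (fun x => lam * (Phi x * cyl_ind w x)) (lam * (I0 + I1))).
  { apply (is_integral_ext nu (transfer beta H g)); [|apply (proj2 hnu g Hgc _ Hg)].
    intros x; rewrite <- Rmult_assoc, <- Phi_eigen; unfold transfer, g.
    change (shift 1 (scons false x)) with x; change (shift 1 (scons true x)) with x; ring. }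
  rewrite (mu_integral w (I0 + I1)); [unfold Rdiv; ring|].
  pose proof lam_pos.
  apply (is_integral_ext nu (fun x => / lam * (lam * (Phi x * cyl_ind w x)))); [intros x; field; lra|].
  replace (I0 + I1) with (/ lam * (lam * (I0 + I1))) by (field; lra).
  apply is_integral_scal, HLg.
Qed.

Lemma mu_pair_swap : mu [false; true] = mu [true; false].
Proof. pose proof (mu_split [false]); pose proof (mu_shift [false]); simpl in *; lra. Qed.

Lemma mu_pair (b : bool) : mu [b; negb b] = K b * nu [b; negb b] / Z.
Proof.
  apply mu_const; intros x Hx; apply in_cyl_pair in Hx as [Hb Hnb]; apply Phi_pair_const; assumption.
Qed.

(* From K_0 nu[0] = K_1 nu[1] (that is, mu[01] = mu[10]) and nu[0] + nu[1] = 1. *)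
Lemma nu_pair_pos (b : bool) : 0 < nu [b; negb b].
Proof.
  assert (Hlam : 0 < 1 - / lam).
  { pose proof lam_gt_1; enough (/ lam < 1) by lra.
    rewrite <- Rinv_1; apply Rinv_lt_contravar; lra. }
  destruct nu_prob as (Hnil & Hpos & Hsplit).
  pose proof (Hsplit []) as Hone; simpl in Hone; rewrite Hnil in Hone.
  pose proof mu_pair_swap as Hswap; pose proof (mu_pair false) as M0; pose proof (mu_pair true) as M1.
  pose proof (nu_pair false) as N0; pose proof (nu_pair true) as N1; simpl negb in *.
  rewrite M0, M1, N0, N1 in Hswap.
  pose proof Z_pos; pose proof (K_pos false); pose proof (K_pos true).
  pose proof (Hpos [false]); pose proof (Hpos [true]).
  assert (Hbal : K false * nu [false] = K true * nu [true]).
  { apply (Rmult_eq_reg_r ((1 - / lam) / Z)); [|apply Rgt_not_eq, Rdiv_lt_0_compat; lra].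
    unfold Rdiv in *; lra. }
  rewrite nu_pair; apply Rmult_lt_0_compat; [exact Hlam|]; destruct b; nra.
Qed.

Lemma mu_pair_pos (b : bool) : 0 < mu [b; negb b].
Proof.
  rewrite mu_pair; pose proof Z_pos; pose proof (K_pos b); pose proof (nu_pair_pos b).
  apply Rdiv_lt_0_compat; [apply Rmult_lt_0_compat|]; lra.
Qed.

Lemma mu_run_ratio (b : bool) (n : nat) (T : R) :
  infinite_sum (fun j => Fw (negb b) (S n + j)) T ->
  mu (repeat b (S n) ++ [negb b]) / mu [b; negb b] = T * F b.
Proof.
  intros HT.
  assert (Hmu : mu (repeat b (S n) ++ [negb b])
                = lam ^ n * T * K (negb b) * nu (repeat b (S n) ++ [negb b]) / Z).
  { apply mu_const; intros x Hx.
    rewrite (scat_shift (repeat b (S n)) x), repeat_length by (eapply in_cyl_app_l, Hx).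
    apply Phi_on_run; [|exact HT].
    unfold shift; rewrite Nat.add_0_r, (Hx (S n)) by (rewrite length_app, repeat_length; simpl; lia).
    rewrite app_nth2, repeat_length, Nat.sub_diag by (rewrite repeat_length; lia); reflexivity. }
  rewrite Hmu, mu_pair, nu_repeat, (K_rec b), (F_inv_negb b).
  pose proof Z_pos; pose proof (K_pos (negb b)); pose proof (F_pos (negb b)).
  pose proof (nu_pair_pos b); pose proof (pow_lt lam n lam_pos).
  field; repeat split; lra.
Qed.

Lemma mu_well_ratio (b : bool) (n : nat) :
  mu (b :: repeat (negb b) (S n) ++ [b]) / mu [negb b; b]
  = exp (- beta * depth H0 H1 b (S n)) * F (negb b) / lam ^ S n.
Proof.
  assert (Hmu : mu (b :: repeat (negb b) (S n) ++ [b]) = K b * nu (b :: repeat (negb b) (S n) ++ [b]) / Z).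
  { apply mu_const; intros x Hx; apply Phi_pair_const; [apply (Hx O); simpl; lia|].
    rewrite (Hx 1%nat); [reflexivity | simpl; rewrite length_app, repeat_length; simpl; lia]. }
  pose proof (mu_pair (negb b)) as Hpair; pose proof (nu_pair_pos (negb b)) as Hpos.
  rewrite Bool.negb_involutive in Hpair, Hpos.
  rewrite Hmu, Hpair, nu_well, (K_rec b); unfold Fterm.
  pose proof Z_pos; pose proof (K_pos (negb b)); pose proof (pow_lt lam (S n) lam_pos).
  field; repeat split; lra.
Qed.

Lemma mu_letter_series (b : bool) : infinite_sum (fun n => mu (repeat b (S n) ++ [negb b])) (mu [b]).
Proof.
  assert (Htele : forall N, mu [b] = sum_f_R0 (fun n => mu (repeat b (S n) ++ [negb b])) N
                                     + mu (repeat b (S (S N)))).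
  { induction N as [|N IH].
    - pose proof (mu_split [b]); destruct b; simpl in *; lra.
    - rewrite IH, tech5; pose proof (mu_split (repeat b (S (S N)))) as Hs.
      destruct b; simpl negb; rewrite <- repeat_cons in Hs;
        change (?b :: repeat ?b (S (S N))) with (repeat b (S (S (S N)))) in Hs; lra. }
  rewrite infinite_sum_Un_cv.
  apply (Un_cv_ext (fun N => mu [b] - mu (repeat b (S (S N))))); [intros N; rewrite (Htele N) at 1; ring|].
  assert (Hrem : Un_cv (fun N => mu (repeat b (S (S N)))) 0).
  { apply (Un_cv_squeeze_0 _ (fun N => / lam ^ S N * (nu [b] / Z))).
    - intros N; pose proof (mu_bounds (repeat b (S (S N)))) as Hb.
      pose proof (nu_repeat b (S N) []) as Hn; rewrite app_nil_r in Hn.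
      rewrite Hn in Hb; unfold Rdiv in *; lra.
    - replace 0 with (0 * (nu [b] / Z)) by ring; apply CV_mult; [|apply Un_cv_const].
      apply (Un_cv_ext (fun N => / lam ^ (N + 1))); [intros N; rewrite Nat.add_1_r; reflexivity|].
      apply (CV_shift' (fun N => / lam ^ N) 1), Un_cv_inv_pow, lam_gt_1. }
  pose proof (CV_minus _ _ _ _ (Un_cv_const (mu [b])) Hrem) as Hlim.
  rewrite Rminus_0_r in Hlim; exact Hlim.
Qed.

Lemma tilde_F_exists (b : bool) :
  exists tF, 0 < tF /\ infinite_sum (fun k => tFterm beta lam (depth H0 H1 (negb b)) (S k)) tF
             /\ mu [b] = F b * mu [b; negb b] * tF.
Proof.
  destruct (choice _ (infinite_sum_tails _ _ (hF (negb b)))) as [U HU].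
  set (C := F b * mu [b; negb b]).
  assert (HC : 0 < C) by (apply Rmult_lt_0_compat; [apply F_pos | apply mu_pair_pos]).
  assert (HmuU : forall n, mu (repeat b (S n) ++ [negb b]) = C * U n).
  { intros n; pose proof (mu_run_ratio b n (U n) (HU n)) as Hr; pose proof (mu_pair_pos b).
    replace (mu (repeat b (S n) ++ [negb b])) with (U n * F b * mu [b; negb b])
      by (rewrite <- Hr; field; lra).
    unfold C; ring. }
  assert (HsumU : infinite_sum U (mu [b] / C)).
  { apply (infinite_sum_ext (fun n => / C * mu (repeat b (S n) ++ [negb b])));
      [intros n; rewrite HmuU; field; lra|].
    unfold Rdiv; rewrite Rmult_comm; apply infinite_sum_scal, mu_letter_series. }
  exists (mu [b] / C); split; [|split].
  - apply Rdiv_lt_0_compat; [|exact HC].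
    pose proof (mu_split [b]); pose proof (mu_pair_pos b); pose proof (mu_bounds [b; b]).
    destruct b; simpl in *; lra.
  - apply (infinite_sum_ext (fun k => INR (S k) * Fw (negb b) (S k)));
      [intros k; unfold tFterm, Fterm; ring|].
    apply (infinite_sum_of_tails (fun k => Fw (negb b) (S k)) U);
      [intros; left; apply Fterm_pos | exact HU | exact HsumU].
  - unfold C; pose proof (F_pos b); pose proof (mu_pair_pos b); field; repeat split; lra.
Qed.

End Measures.
End WellSums.
End Eigenfunction.

Theorem corollary3p6
  (H : Sigma -> R) (H0 H1 : nat -> R) (beta lam : R)
  (Phi : Sigma -> R) (nu mu : word -> R)
  (hH : reduced_double_well H H0 H1) (hbeta : 0 < beta)
  (hPhi : is_eigenfunction beta H lam Phi)
  (hnu : is_eigenmeasure beta H lam nu)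
  (hmu : is_gibbs_cyl nu Phi mu) :
  exists F0 F1 tF0 tF1 : R,
    infinite_sum (fun k => Fterm beta lam H0 (S k)) F0 /\
    infinite_sum (fun k => Fterm beta lam H1 (S k)) F1 /\
    infinite_sum (fun k => tFterm beta lam H0 (S k)) tF0 /\
    infinite_sum (fun k => tFterm beta lam H1 (S k)) tF1 /\
    (* 1 *)
    mu [false; true] = mu [true; false] /\
    (* 2 *)
    (forall n, (1 <= n)%nat ->
       exists T, infinite_sum (fun j => Fterm beta lam H1 (n + j)%nat) T /\
         mu (repeat false n ++ [true]) / mu [false; true] = T * F0) /\
    mu [false] / mu [false; true] = tF1 / F1 /\
    (* 3 *)
    (forall n, (1 <= n)%nat ->
       exists T, infinite_sum (fun j => Fterm beta lam H0 (n + j)%nat) T /\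
         mu (repeat true n ++ [false]) / mu [true; false] = T * F1) /\
    mu [true] / mu [true; false] = tF0 / F0 /\
    (* 4 *)
    (forall n, (1 <= n)%nat ->
       mu (false :: repeat true n ++ [false]) / mu [true; false]
         = exp (- beta * H0 n) * F1 / lam ^ n /\
       mu (true :: repeat false n ++ [true]) / mu [false; true]
         = exp (- beta * H1 n) * F0 / lam ^ n) /\
    (* 5 *)
    mu [false] / mu [true] = F0 / F1 * (tF1 / tF0).
Proof.
  destruct hmu as [Z [hZ hmuZ]].
  destruct (F_exists hH hPhi) as [F hF].
  pose proof (F_pos hPhi F hF false); pose proof (F_pos hPhi F hF true).
  pose proof (F_inv_negb hH hbeta hPhi F hF false) as HF0.
  pose proof (mu_pair_pos hH hbeta hPhi F hF hnu hZ hmuZ false).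
  pose proof (mu_pair_swap hPhi hnu hmuZ) as Hswap.
  destruct (tilde_F_exists hH hbeta hPhi F hF hnu hZ hmuZ true) as [tF0 [HtF0 [htF0 Hmu1]]].
  destruct (tilde_F_exists hH hbeta hPhi F hF hnu hZ hmuZ false) as [tF1 [HtF1 [htF1 Hmu0]]].
  pose proof (mu_run_ratio hH hbeta hPhi F hF hnu hZ hmuZ) as Hrun.
  pose proof (mu_well_ratio hH hbeta hPhi F hF hnu hZ hmuZ) as Hwell.
  simpl negb in *.
  exists (F false), (F true), tF0, tF1.
  split; [exact (hF false)|]; split; [exact (hF true)|]; split; [exact htF0|]; split; [exact htF1|].
  split; [exact Hswap|].
  split; [intros [|n] Hn; [lia|]; destruct (infinite_sum_tails _ _ (hF true) n) as [T HT];
          exists T; split; [exact HT | exact (Hrun false n T HT)]|].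
  split; [rewrite Hmu0, HF0; field; lra|].
  split; [intros [|n] Hn; [lia|]; destruct (infinite_sum_tails _ _ (hF false) n) as [T HT];
          exists T; split; [exact HT | exact (Hrun true n T HT)]|].
  split; [rewrite Hmu1, <- Hswap, HF0; field; lra|].
  split; [intros [|n] Hn; [lia | split; [exact (Hwell false n) | exact (Hwell true n)]]|].
  rewrite Hmu0, Hmu1, <- Hswap; field; repeat split; lra.
Qed.
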